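(* Let $K$ and $K'$ be two CMIs on $X_1,\dots,X_n$ (not necessarily in pure form). Then $K\sim K'$ if and only if $\mathrm{can}(\mathrm{pur}(K))=\mathrm{can}(\mathrm{pur}(K'))$.
   Context: Setting: $X_1,\dots,X_n$ are jointly distributed discrete random variables with $H(X_i)<\infty$ for all $i$; the joint distribution is otherwise unspecified. Write $\mathcal N_n=\{1,\dots,n\}$, $X_\alpha=(X_i,i\in\alpha)$, and $X_\emptyset$ is a constant. A CMI is a pair $K=(C,\langle Q_1,\dots,Q_k\rangle)$ with $k\ge0$, $C\subseteq\mathcal N_n$, $\langle Q_1,\dots,Q_k\rangle$ an unordered multiset of subsets of $\mathcal N_n$. For a given joint distribution, $K$ is valid if $\sum_{i=1}^k H(X_{Q_i}|X_C)-H(X_{Q_1},\dots,X_{Q_k}|X_C)=0$. Empty members may be deleted. Two CMIs are equal if conditioning sets and multisets coincide. $K\sim K'$ means that for every joint distribution both are valid or both invalid. Degenerate CMIs (valid for every distribution) are all identified and written $(\cdot,\langle\ \rangle)$. Pure form: $\mathrm{pur}(K)=(C,\langle Q_i\setminus C: Q_i\setminus C\ne\emptyset\rangle)$ (with multiplicity). A CMI is in pure form if all $Q_i\neq\emptyset$ and $Q_i\cap C=\emptyset$. Canonical form of a pure $K=(C,\langle Q_1,\dots,Q_k\rangle)$: if $k\ge2$, $\mathbb I_K$ is the set of indices lying in at least two members (distinct positions) of the collection; $\mathbb I_K=\emptyset$ if $k\le1$. Let $P_1,\dots,P_t$ be the nonempty sets among $Q_i\setminus\mathbb I_K$ (with multiplicity).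 Then $\mathrm{can}(K)=(\cdot,\langle\ \rangle)$ if $k\le1$; $(C,\langle\mathbb I_K,\mathbb I_K\rangle)$ if $k\ge2,\mathbb I_K\ne\emptyset,t\le1$; $(C,\langle P_1,\dots,P_t\rangle)$ if $k\ge2,\mathbb I_K=\emptyset$; $(C,\langle\mathbb I_K,\mathbb I_K,P_1,\dots,P_t\rangle)$ if $k\ge2,\mathbb I_K\ne\emptyset,t\ge2$. *)

From HB Require Import structures.
From mathcomp Require Import all_boot all_order all_algebra.
From mathcomp Require Import boolp classical_sets functions reals ereal esum exp.
From mathcomp Require Import Rstruct.
From Stdlib Require Rdefinitions.

Set Implicit Arguments.
Unset Strict Implicit.
Unset Printing Implicit Defensive.

Import Order.TTheory GRing.Theory Num.Theory.
Local Open Scope classical_set_scope.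
Local Open Scope ring_scope.

(* A CMI K = (C, <Q_1,...,Q_k>); the multiset is represented by a list,
   considered up to permutation (perm_eq). *)
Record cmi (n : nat) := CMI { cmi_cond : {set 'I_n}; cmi_mems : seq {set 'I_n} }.

Definition pur n (K : cmi n) : cmi n :=
  CMI (cmi_cond K)
      [seq Q :\: cmi_cond K | Q <- cmi_mems K & Q :\: cmi_cond K != finset.set0].

Definition II n (qs : seq {set 'I_n}) : {set 'I_n} :=
  [set i | leq 2 (count (fun Q : {set 'I_n} => i \in Q) qs)].

(* Canonical forms: None stands for the degenerate CMI (.,< >);
   Some (C, s) for the CMI (C, s). *)
Definition canform n := option ({set 'I_n} * seq {set 'I_n}).

Definition can n (K : cmi n) : canform n :=
  let C := cmi_cond K in
  let qs := cmi_mems K in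
  let I := II qs in
  let Ps := [seq Q :\: I | Q <- qs & Q :\: I != finset.set0] in
  if leq (size qs) 1 then None
  else if I == finset.set0 then Some (C, Ps)
  else if leq (size Ps) 1 then Some (C, [:: I; I])
  else Some (C, I :: I :: Ps).

Definition canform_eq n (a b : canform n) : Prop :=
  match a, b with
  | None, None => True
  | Some (C, s), Some (C', s') => C = C' /\ perm_eq s s'
  | _, _ => False
  end.

(* A joint distribution of discrete X_0,...,X_{n-1}, each X_i taking   *)
(* values in a countable alphabet (coded by nat), is a probability    *)
(* mass function p on outcomes x : {ffun 'I_n -> nat}.                *)

Section Entropy.
Variable R : realType.
Variable n : nat.
Local Open Scope ereal_scope.

Definition outcome := {ffun 'I_n -> nat}.

(* restriction of an outcome to the coordinates in A (others set to 0):
   this codes the value of X_A *)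
Definition restr (A : {set 'I_n}) (x : outcome) : outcome :=
  [ffun i => if i \in A then x i else O].

Definition marg (p : outcome -> R) (A : {set 'I_n}) (y : outcome) : \bar R :=
  \esum_(x in [set x | restr A x = y]) (p x)%:E.

Definition eta (q : R) : R := - (q * ln q).

Definition entropy (p : outcome -> R) (A : {set 'I_n}) : \bar R :=
  \esum_(y in [set: outcome]) (eta (fine (marg p A y)))%:E.

Definition is_joint_dist (p : outcome -> R) : Prop :=
  (forall x, (0 <= p x)%R) /\
  \esum_(x in [set: outcome]) (p x)%:E = 1 /\
  (forall i : 'I_n, entropy p [set i] < +oo).

Definition centropy (p : outcome -> R) (A C : {set 'I_n}) : R :=
  (fine (entropy p (A :|: C)) - fine (entropy p C))%R.

Definition cmi_valid (p : outcome -> R) (K : cmi n) : Prop :=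
  ((\sum_(Q <- cmi_mems K) centropy p Q (cmi_cond K))
   - centropy p (\bigcup_(Q <- cmi_mems K) Q) (cmi_cond K) = 0)%R.

End Entropy.

Definition cmi_equiv n (K K' : cmi n) : Prop :=
  forall p : outcome n -> Rdefinitions.R,
    is_joint_dist p -> (cmi_valid p K <-> cmi_valid p K').

(* Validity of K = (C, <Q_1, ..., Q_k>) says that the Q_i are independent for the
   conditional polymatroid A |-> H(X_A | X_C).  In a polymatroid, independence of a
   family forces every index lying in two members to be null, and discarding null
   indices (those of C, then those of I_K) preserves independence; so validity only
   depends on can(pur K).
   Conversely, let X_S be one fair coin and all other variables constant: K is then
   valid iff S meets C or meets at most one Q_i.  For a pure K with two or more
   members, these validity patterns determine C, the set I_K (its points are the
   invalid singletons) and which pairs of points lie in distinct blocks Q_i \ I_K,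
   hence the blocks up to order. *)

From mathcomp Require Import all_boot all_order all_algebra.
From mathcomp Require Import zify.

Set Implicit Arguments.
Unset Strict Implicit.
Unset Printing Implicit Defensive.

Import Order.TTheory GRing.Theory Num.Theory.

Lemma bigcup_set1E (T : finType) (I : {set T}) : \bigcup_(x in I) [set x] = I.
Proof.
apply/setP => y; apply/bigcupP/idP => [[x xI /set1P -> //]|yI].
by exists y; rewrite ?set11.
Qed.

Section Polymatroid.
Variables (R : realDomainType) (T : finType) (f : {set T} -> R).
Local Open Scope ring_scope.
Implicit Types (A B I W X : {set T}) (L : seq {set T}).

Hypothesis f_set0 : f set0 = 0.
Hypothesis f_mono : forall A B, A \subset B -> f A <= f B.
Hypothesis f_submod : forall A B, f (A :|: B) + f (A :&: B) <= f A + f B.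

Definition independent L : Prop := \sum_(Q <- L) f Q = f (\bigcup_(Q <- L) Q).

Lemma f_ge0 A : 0 <= f A.
Proof. by rewrite -f_set0 f_mono ?sub0set. Qed.

Lemma f_subaddU A B : f (A :|: B) <= f A + f B.
Proof. by apply: le_trans (f_submod A B); rewrite lerDl f_ge0. Qed.

Lemma f_subadd_big (I : Type) (r : seq I) (F : I -> {set T}) :
  f (\bigcup_(i <- r) F i) <= \sum_(i <- r) f (F i).
Proof.
elim: r => [|i r IH]; first by rewrite !big_nil f_set0.
by rewrite !big_cons (le_trans (f_subaddU _ _)) // lerD2l.
Qed.

Lemma independent_perm L L' : perm_eq L L' -> independent L <-> independent L'.
Proof. by move=> eqLL'; rewrite /independent !(perm_big _ eqLL'). Qed.

Lemma independent_small L : (size L <= 1)%N -> independent L.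
Proof.
case: L => [|Q [|]] //= _; first by rewrite /independent !big_nil f_set0.
by rewrite /independent !big_seq1.
Qed.

Lemma f_null_setU I X : f I = 0 -> f (I :|: X) = f X.
Proof.
move=> fI0; apply/eqP; rewrite eq_le (f_mono (subsetUr I X)) andbT.
by rewrite (le_trans (f_subaddU _ _)) // fI0 add0r.
Qed.

Lemma f_null_setD I X : f I = 0 -> f (X :\: I) = f X.
Proof.
move=> fI0; rewrite -(f_null_setU (X :\: I) fI0) setDE setUIr setUCr setIT.
exact: f_null_setU.
Qed.

Lemma f_null_points I : (forall x, x \in I -> f [set x] = 0) -> f I = 0.
Proof.
move=> fx0; apply/eqP; rewrite eq_le f_ge0 andbT.
rewrite -[I in f I]bigcup_set1E -big_enum (le_trans (f_subadd_big _ _)) // big1_seq // => x /andP[_].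
by rewrite mem_enum => /fx0.
Qed.

Lemma independent_setD W L : (forall X, f (X :\: W) = f X) ->
  independent L <-> independent [seq Q :\: W | Q <- L & Q :\: W != set0].
Proof.
move=> fW; rewrite /independent !big_map !big_filter.
have -> : \bigcup_(Q <- L | Q :\: W != set0) (Q :\: W) = (\bigcup_(Q <- L) Q) :\: W.
  rewrite (big_morph (fun A => A :\: W) (fun A B => setDUl A B W) (set0D W)).
  by rewrite big_mkcond; apply: eq_bigr => Q _; case: eqP => [->|].
have -> : \sum_(Q <- L | Q :\: W != set0) f (Q :\: W) = \sum_(Q <- L) f Q.
  rewrite big_mkcond; apply: eq_bigr => Q _.
  by rewrite -(fW Q); case: eqP => // ->; rewrite f_set0.
by rewrite fW.
Qed.

Lemma independent_meet_null Qa Qb L :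
  independent [:: Qa, Qb & L] -> f (Qa :&: Qb) = 0.
Proof.
rewrite /independent !big_cons setUA => indep.
have le_sum : f Qa + f Qb <= f (Qa :|: Qb).
  rewrite -(lerD2r (\sum_(Q <- L) f Q)) -addrA indep.
  by rewrite (le_trans (f_subaddU _ _)) // lerD2l f_subadd_big.
apply/eqP; rewrite eq_le f_ge0 andbT -(lerD2l (f (Qa :|: Qb))) addr0.
exact: le_trans (f_submod Qa Qb) le_sum.
Qed.

Lemma independent_shared_null L (x : T) : independent L ->
  (1 < count (fun Q : {set T} => x \in Q) L)%N -> f [set x] = 0.
Proof.
set a := fun Q : {set T} => x \in Q; move=> indep; rewrite -size_filter.
have := (independent_perm (permEl (perm_filterC a L))).2 indep.
case: (filter a L) (filter_all a L) => [|Qa [|Qb rest]] //= /and3P[xQa xQb _].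
move=> /independent_meet_null fI0 _; apply/eqP; rewrite eq_le f_ge0 andbT -fI0.
by rewrite f_mono // sub1set inE; apply/andP.
Qed.

Lemma independent_cons2 I L : independent [:: I, I & L] <-> f I = 0 /\ independent L.
Proof.
have null_indep : f I = 0 -> independent [:: I, I & L] <-> independent L.
  by move=> fI0; rewrite /independent !big_cons setUA setUid fI0 !add0r f_null_setU.
split=> [indep|[fI0]]; last exact: (null_indep fI0).2.
have fI0 : f I = 0 by rewrite -(independent_meet_null indep) setIid.
by split=> //; apply: (null_indep fI0).1.
Qed.

End Polymatroid.

Section SharedIndices.
Variables (R : realDomainType) (n : nat) (f : {set 'I_n} -> R).
Local Open Scope ring_scope.
Implicit Types (A B X : {set 'I_n}) (L : seq {set 'I_n}).
Hypothesis f_set0 : f set0 = 0.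
Hypothesis f_mono : forall A B, A \subset B -> f A <= f B.
Hypothesis f_submod : forall A B, f (A :|: B) + f (A :&: B) <= f A + f B.

Definition residues (L : seq {set 'I_n}) :=
  [seq Q :\: II L | Q <- L & Q :\: II L != set0].

Lemma independent_II L :
  independent f L <-> f (II L) = 0 /\ independent f (residues L).
Proof.
have setD_II : f (II L) = 0 -> forall X, f (X :\: II L) = f X.
  by move=> fI0 X; apply: f_null_setD.
split=> [indep|[fI0]]; last exact: (independent_setD f_set0 L (setD_II fI0)).2.
have fI0 : f (II L) = 0.
  apply: f_null_points => // x; rewrite inE.
  exact: independent_shared_null.
by split=> //; apply: (independent_setD f_set0 L (setD_II fI0)).1.
Qed.

End SharedIndices.

Section Conditioning.
Variables (R : realDomainType) (n : nat) (h : {set 'I_n} -> R).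
Local Open Scope ring_scope.
Implicit Types (A B C X : {set 'I_n}) (L : seq {set 'I_n}).
Hypothesis h_mono : forall A B, A \subset B -> h A <= h B.
Hypothesis h_submod : forall A B, h (A :|: B) + h (A :&: B) <= h A + h B.

Definition cond C A := h (A :|: C) - h C.

Lemma cond_set0 C : cond C set0 = 0.
Proof. by rewrite /cond set0U subrr. Qed.

Lemma cond_mono C A B : A \subset B -> cond C A <= cond C B.
Proof. by move=> sAB; rewrite lerD2r h_mono // setSU. Qed.

Lemma cond_submod C A B : cond C (A :|: B) + cond C (A :&: B) <= cond C A + cond C B.
Proof.
rewrite /cond addrACA [leRHS]addrACA lerD2r.
by have := h_submod (A :|: C) (B :|: C); rewrite setUACA setUid -setUIl.
Qed.

Lemma cond_setD C X : cond C (X :\: C) = cond C X.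
Proof. by rewrite /cond setDE setUIl [~: C :|: C]setUC setUCr setIT. Qed.

Definition can_valid (c : canform n) : Prop :=
  if c is Some (C, L) then independent (cond C) L else True.

Lemma can_valid_eq a b : canform_eq a b -> can_valid a <-> can_valid b.
Proof. by case: a b => [[C L]|] [[C' L']|] //= [<- /independent_perm]. Qed.

(* For [h := fun A => fine (entropy p A)], [cmi_gap K = 0] is [cmi_valid p K]
   up to conversion. *)
Definition cmi_gap (K : cmi n) : R :=
  \sum_(Q <- cmi_mems K) cond (cmi_cond K) Q
  - cond (cmi_cond K) (\bigcup_(Q <- cmi_mems K) Q).

Lemma cmi_gap_eq0 K : cmi_gap K = 0 <-> can_valid (can (pur K)).
Proof.
case: K => C L; rewrite /cmi_gap /can /pur /=.
apply: (iff_trans (_ : _ <-> independent (cond C) L)).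
  by rewrite /independent; split=> [/subr0_eq|->]; last exact: subrr.
rewrite (independent_setD (cond_set0 C) L (@cond_setD C)).
set LC := [seq _ | _ <- _ & _].
have small_valid := independent_small (cond_set0 C).
case: leqP => [/small_valid //|_].
rewrite (independent_II (cond_set0 C) (@cond_mono C) (@cond_submod C)) -/(residues LC).
case: eqP => [->|_]; first by rewrite cond_set0; split=> [[]|].
have cons2 := independent_cons2 (cond_set0 C) (@cond_mono C) (@cond_submod C).
case: leqP => [/small_valid indep_res|_] /=; last by rewrite cons2.
by rewrite cons2; split=> -[-> _]; split=> //; apply: small_valid.
Qed.

End Conditioning.

Section Blocks.
Variable T : finType.
Implicit Types (P S W : {set T}) (L : seq {set T}) (x y z : T).

Definition hits L S := count (fun P => P :&: S != set0) L.

Definition separated L x y := (1 < hits L [set x; y])%N.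

Definition blocks_outside W L := [/\ forall P, P \in L -> P != set0,
  forall P, P \in L -> [disjoint P & W] &
  forall x, x \notin W -> (count (fun P => x \in P) L <= 1)%N].

Lemma bigcup_meets L S : ((\bigcup_(P <- L) P) :&: S != set0) = (0 < hits L S)%N.
Proof.
elim: L => [|P L IH]; first by rewrite big_nil set0I eqxx.
by rewrite big_cons setIUl setU_eq0 negb_and IH /hits /=; case: (P :&: S != set0).
Qed.

Lemma meets2 P x y : (P :&: [set x; y] != set0) = (x \in P) || (y \in P).
Proof.
apply/set0Pn/orP => [[z /setIP[zP /set2P[] <-]]|[xP|yP]]; [by left|by right|..].
  by exists x; rewrite !inE xP eqxx.
by exists y; rewrite !inE yP eqxx orbT.
Qed.

Lemma hits2 L x y : (hits L [set x; y] + count (fun P => (x \in P) && (y \in P)) L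
  = count (fun P => x \in P) L + count (fun P => y \in P) L)%N.
Proof.
by rewrite -count_predUI; congr (_ + _)%N; apply: eq_count => P; rewrite /= meets2.
Qed.

Lemma separated_distinct L P P' x y : P \in L -> P' \in L -> P != P' ->
  x \in P -> y \in P' -> separated L x y.
Proof.
move=> PL P'L neqPP' xP yP'; rewrite /separated /hits -size_filter.
have -> : 2 = size [:: P; P'] by [].
apply: uniq_leq_size => [|Q]; first by rewrite /= inE neqPP'.
by rewrite !inE mem_filter meets2 => /orP[]/eqP->; rewrite ?xP ?yP' ?orbT.
Qed.

Section Outside.
Variables (W : {set T}) (L : seq {set T}).
Hypothesis blocksL : blocks_outside W L.

Lemma blocks_notin P x : P \in L -> x \in P -> x \notin W.
Proof. by case: blocksL => _ dW _ /dW; rewrite disjoint_subset => /subsetP/[apply]. Qed.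

Lemma blocks_uniq : uniq L.
Proof.
have [nz _ c1] := blocksL; apply: count_mem_uniq => P.
case PL: (P \in L); last by apply/count_memPn; rewrite PL.
apply/eqP; rewrite eqn_leq -has_count has_pred1 PL andbT.
have /set0Pn[x xP] := nz _ PL; apply: leq_trans (c1 _ (blocks_notin PL xP)).
by apply: sub_count => Q /= /eqP ->.
Qed.

Lemma blocks_other P : (1 < size L)%N -> P \in L -> exists2 P', P' \in L & P' != P.
Proof.
move=> sL PL; case: (boolP (all (pred1 P) L)) => [/allP allP|/allPn[P' P'L]]; last by exists P'.
suff : (size L <= size [:: P])%N by rewrite leqNgt sL.
by apply: uniq_leq_size blocks_uniq _ => Q /allP/eqP->; rewrite inE.
Qed.

Lemma separated_covered x y : x \notin W -> y \notin W -> separated L x y ->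
  exists2 P, P \in L & x \in P.
Proof.
have [_ _ c1] := blocksL; move=> xW yW; rewrite /separated.
have := hits2 L x y; have := c1 _ yW => cy e sep.
suff : (0 < count (fun P => x \in P) L)%N by rewrite -has_count => /hasP.
lia.
Qed.

Lemma same_block_not_separated P x z : P \in L -> x \in P -> z \in P ->
  ~~ separated L x z.
Proof.
have [_ _ c1] := blocksL; move=> PL xP zP; rewrite /separated -leqNgt.
have := hits2 L x z.
have : (0 < count (fun P => (x \in P) && (z \in P)) L)%N.
  by rewrite -has_count; apply/hasP; exists P; rewrite ?xP ?zP.
have := c1 _ (blocks_notin PL xP); have := c1 _ (blocks_notin PL zP).
lia.
Qed.

Lemma covered_separated P x : (1 < size L)%N -> P \in L -> x \in P ->
  exists2 y, y \notin W & separated L x y.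
Proof.
move=> sL PL xP; have [P' P'L neqP'P] := blocks_other sL PL.
have [nz _ _] := blocksL; have /set0Pn[y yP'] := nz _ P'L.
exists y; first exact: blocks_notin P'L yP'.
by apply: separated_distinct PL P'L _ xP yP'; rewrite eq_sym.
Qed.

End Outside.

(* A block containing [x] consists of [x] and the covered points not separated
   from [x], so the separation relation determines the blocks. *)
Section SameSeparation.
Variables (W : {set T}) (L L' : seq {set T}).
Hypotheses (blocksL : blocks_outside W L) (blocksL' : blocks_outside W L').
Hypothesis same_sep : forall x y, x \notin W -> y \notin W ->
  separated L x y = separated L' x y.

Lemma same_sep_size : (1 < size L)%N -> (1 < size L')%N.
Proof.
move=> sL; have P0L : nth set0 L 0 \in L by apply: mem_nth; apply: ltnW.
have [nz _ _] := blocksL; have /set0Pn[x xP] := nz _ P0L.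
have [y yW] := covered_separated blocksL sL P0L xP.
rewrite same_sep ?(blocks_notin blocksL P0L xP) // => /leq_trans; apply.
exact: count_size.
Qed.

Lemma same_sep_covered P x : (1 < size L)%N -> P \in L -> x \in P ->
  exists2 P', P' \in L' & x \in P'.
Proof.
move=> sL PL xP; have xW := blocks_notin blocksL PL xP.
have [y yW] := covered_separated blocksL sL PL xP.
by rewrite same_sep // => /(separated_covered blocksL' xW yW).
Qed.

Lemma same_sep_sub P P' x : (1 < size L)%N -> P \in L -> P' \in L' ->
  x \in P -> x \in P' -> P \subset P'.
Proof.
move=> sL PL P'L' xP xP'; apply/subsetP => z zP; apply/negPn/negP => zP'.
have [P'' P''L' zP''] := same_sep_covered sL PL zP.
have := same_block_not_separated blocksL PL xP zP.
rewrite same_sep ?(blocks_notin blocksL PL xP) ?(blocks_notin blocksL PL zP) //.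
apply/negP/negPn/(separated_distinct P'L' P''L' _ xP' zP'').
by apply: contraNneq zP' => ->.
Qed.

End SameSeparation.

Lemma same_sep_subset W L L' : blocks_outside W L -> blocks_outside W L' ->
  (forall x y, x \notin W -> y \notin W -> separated L x y = separated L' x y) ->
  (1 < size L)%N -> {subset L <= L'}.
Proof.
move=> blocksL blocksL' same_sep sL P PL.
have same_sep' x y xW yW := esym (same_sep x y xW yW).
have [nz _ _] := blocksL; have /set0Pn[x xP] := nz _ PL.
have [P' P'L' xP'] := same_sep_covered blocksL blocksL' same_sep sL PL xP.
suff -> : P = P' by [].
apply/eqP; rewrite eqEsubset (same_sep_sub blocksL blocksL' same_sep sL PL P'L' xP xP').
have sL' := same_sep_size blocksL same_sep sL.
exact: (same_sep_sub blocksL' blocksL same_sep' sL' P'L' PL xP' xP).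
Qed.

Lemma blocks_perm W L L' : blocks_outside W L -> blocks_outside W L' ->
  (forall x y, x \notin W -> y \notin W -> separated L x y = separated L' x y) ->
  (1 < size L)%N -> perm_eq L L'.
Proof.
move=> blocksL blocksL' same_sep sL.
have same_sep' x y xW yW := esym (same_sep x y xW yW).
have sL' := same_sep_size blocksL same_sep sL.
apply: uniq_perm (blocks_uniq blocksL) (blocks_uniq blocksL') _ => P.
apply/idP/idP; first exact: (same_sep_subset blocksL blocksL' same_sep sL).
exact: (same_sep_subset blocksL' blocksL same_sep' sL').
Qed.

End Blocks.

Section CoinCriterion.
Variable n : nat.
Implicit Types (C P Q S : {set 'I_n}) (L : seq {set 'I_n}) (x y : 'I_n) (K : cmi n).

(* Validity of [K] when [X_S] is one fair coin and the other [X_i] are constant,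
   see [cmi_valid_coin]. *)
Definition coin_valid S K : bool :=
  (cmi_cond K :&: S != set0) || (hits (cmi_mems K) S <= 1)%N.

Definition pure K : bool :=
  all (fun Q => (Q != set0) && [disjoint Q & cmi_cond K]) (cmi_mems K).

Lemma pure_pur K : pure (pur K).
Proof.
apply/allP => P /mapP[Q]; rewrite mem_filter => /andP[QC0 _] ->.
by rewrite QC0 /= disjoint_subset; apply/subsetP => x /setDP[].
Qed.

Lemma coin_valid_pur S K : coin_valid S (pur K) = coin_valid S K.
Proof.
case: K => C L; rewrite /coin_valid /=; case: eqP => //= /setP CS0.
rewrite /hits count_map count_filter; congr (_ <= 1)%N; apply: eq_count => Q /=.
have -> : (Q :\: C) :&: S = Q :&: S.
  apply/setP => x; move: (CS0 x); rewrite !inE.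
  by case: (x \in C); case: (x \in Q); case: (x \in S).
case: set0Pn => //= -[x /setIP[xQ xS]]; apply/set0Pn; exists x.
by move: (CS0 x); rewrite !inE xQ xS andbT => ->.
Qed.

Section Pure.
Variable K : cmi n.
Hypothesis pureK : pure K.
Let C := cmi_cond K.
Let L := cmi_mems K.

Lemma pure_mem Q : Q \in L -> Q != set0 /\ [disjoint Q & C].
Proof. by move: pureK => /allP/[apply]/andP. Qed.

Lemma pure_notin_cond Q x : Q \in L -> x \in Q -> x \notin C.
Proof. by case/pure_mem => _; rewrite disjoint_subset => /subsetP/[apply]. Qed.

Lemma coin_valid_small S : (size L <= 1)%N -> coin_valid S K.
Proof. by move=> sL; rewrite /coin_valid (leq_trans (count_size _ _) sL) orbT. Qed.

Lemma pure_meets_two : (1 < size L)%N ->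
  exists2 U, C :&: U = set0 & forall S, U \subset S -> (1 < hits L S)%N.
Proof.
move=> sL; have [Q1 [Q2 [rest eL]]] : exists Q1 Q2 rest, L = [:: Q1, Q2 & rest].
  by move: sL; rewrite /L; case: (cmi_mems K) => [|Q1 [|Q2 rest]] // _; exists Q1, Q2, rest.
have [Q1_0 dQ1] : Q1 != set0 /\ [disjoint Q1 & C] by apply: pure_mem; rewrite eL mem_head.
have [Q2_0 dQ2] : Q2 != set0 /\ [disjoint Q2 & C].
  by apply: pure_mem; rewrite eL !inE eqxx orbT.
exists (Q1 :|: Q2).
  by apply/eqP; rewrite setIUr setU_eq0 !(setIC C) !setI_eq0 dQ1 dQ2.
move=> S sUS; rewrite eL /hits /=.
have meets Q : Q != set0 -> Q \subset S -> Q :&: S != set0.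
  by move=> /set0Pn[x xQ] /subsetP QS; apply/set0Pn; exists x; rewrite inE xQ QS.
by rewrite !meets // (subset_trans _ sUS) // (subsetUl, subsetUr).
Qed.

Lemma pure_size_le1 : (size L <= 1)%N = [forall S : {set 'I_n}, coin_valid S K].
Proof.
apply/idP/forallP => [sL S|valid]; first exact: coin_valid_small.
rewrite leqNgt; apply/negP => /pure_meets_two[U CU hitsU].
by move: (valid U); rewrite /coin_valid -/C -/L CU eqxx leqNgt hitsU.
Qed.

Lemma pure_cond_coin : (1 < size L)%N ->
  C = [set j | [forall S : {set 'I_n}, (j \in S) ==> coin_valid S K]].
Proof.
move=> /pure_meets_two[U CU hitsU]; apply/setP => j; rewrite inE.
apply/idP/forallP => [jC S|valid].
  by apply/implyP => jS; apply/orP; left; apply/set0Pn; exists j; rewrite inE jC.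
apply: contraT => jC; have := valid (j |: U); rewrite setU11 /= /coin_valid -/C.
have -> : C :&: (j |: U) = set0.
  apply/setP => i; rewrite setIUr CU setU0 !inE.
  by case: eqP => [->|]; rewrite ?andbF // (negbTE jC).
by rewrite -/L eqxx leqNgt hitsU // subsetUr.
Qed.

Lemma in_II_coin x : (x \in II L) = ~~ coin_valid [set x] K.
Proof.
have hits1 : hits L [set x] = count (fun Q => x \in Q) L.
  apply: eq_count => Q; apply/set0Pn/idP => [[y /setIP[yQ /set1P <-]]|xQ] //.
  by exists x; rewrite inE xQ set11.
rewrite inE /coin_valid -/C hits1; case: (boolP (x \in C)) => xC.
  have -> : C :&: [set x] != set0 by apply/set0Pn; exists x; rewrite inE xC set11.
  rewrite (eq_in_count (a2 := pred0)) ?count_pred0 // => Q QL /=.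
  exact: contraTF (pure_notin_cond QL) xC.
have -> : C :&: [set x] = set0.
  by apply/setP => i; rewrite !inE; case: eqP => [->|]; rewrite ?andbF // (negbTE xC).
by rewrite eqxx ltnNge.
Qed.

Lemma blocks_residues : blocks_outside (C :|: II L) (residues L).
Proof.
split.
- by move=> P /mapP[Q]; rewrite mem_filter => /andP[? _] ->.
- move=> P /mapP[Q]; rewrite mem_filter => /andP[_ QL] ->.
  rewrite disjoint_subset; apply/subsetP => x /setDP[xQ xI].
  by rewrite inE in_setU negb_or xI (pure_notin_cond QL xQ).
- move=> x; rewrite in_setU inE negb_or -leqNgt => /andP[_ xI].
  rewrite count_map count_filter; apply: leq_trans xI.
  by apply: sub_count => Q /= /andP[/setDP[]].
Qed.

Lemma size_residues_II0 : II L = set0 -> size (residues L) = size L.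
Proof.
move=> I0; rewrite size_map size_filter I0 (eq_in_count (a2 := predT)) ?count_predT //.
by move=> Q /pure_mem[]; rewrite setD0.
Qed.

Lemma separated_residues x y : x \notin C :|: II L -> y \notin C :|: II L ->
  separated (residues L) x y = ~~ coin_valid [set x; y] K.
Proof.
rewrite !in_setU !negb_or => /andP[xC xI] /andP[yC yI].
have -> : C :&: [set x; y] = set0.
  apply/setP => i; rewrite !inE; apply/negbTE/negP => /andP[iC /orP[]/eqP ei].
  - by move: xC; rewrite -ei iC.
  - by move: yC; rewrite -ei iC.
rewrite /coin_valid eqxx /separated ltnNge /hits count_map count_filter.
congr (~~ (_ <= 1)%N); apply: eq_count => Q /=.
rewrite !meets2 !in_setD xI yI /=.
case/boolP: ((x \in Q) || (y \in Q)) => //= xyQ; apply/set0Pn.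
by case/orP: xyQ => [xQ|yQ]; [exists x|exists y]; rewrite in_setD ?xI ?yI.
Qed.

End Pure.

Lemma can_eq_of_coin_valid_pure K K' : pure K -> pure K' ->
  (forall S, coin_valid S K = coin_valid S K') -> canform_eq (can K) (can K').
Proof.
move=> pureK pureK' same.
have size_le1 : (size (cmi_mems K) <= 1)%N = (size (cmi_mems K') <= 1)%N.
  by rewrite !pure_size_le1 //; apply: eq_forallb => S; rewrite same.
rewrite /can /= -size_le1; case: leqP => // sL.
have sL' : (1 < size (cmi_mems K'))%N by rewrite ltnNge -size_le1 -ltnNge.
have eC : cmi_cond K = cmi_cond K'.
  rewrite (pure_cond_coin pureK sL) (pure_cond_coin pureK' sL').
  by apply/setP => j; rewrite !inE; apply: eq_forallb => S; rewrite same.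
have eI : II (cmi_mems K) = II (cmi_mems K').
  by apply/setP => x; rewrite !in_II_coin // same.
set W := cmi_cond K :|: II (cmi_mems K).
have blocks := blocks_residues pureK; have blocks' := blocks_residues pureK'.
rewrite -eC -eI -/W in blocks'.
have same_sep x y : x \notin W -> y \notin W ->
    separated (residues (cmi_mems K)) x y = separated (residues (cmi_mems K')) x y.
  by move=> xW yW; rewrite !separated_residues -?eC -?eI // same.
have size_res : (1 < size (residues (cmi_mems K)))%N = (1 < size (residues (cmi_mems K')))%N.
  apply/idP/idP; first exact: same_sep_size blocks same_sep.
  by apply: same_sep_size blocks' _ => x y xW yW; rewrite same_sep.
rewrite -/(residues (cmi_mems K)) -/(residues (cmi_mems K')) -eC -eI.
case: eqP => [I0|_].
  by split=> //; apply: blocks_perm blocks blocks' same_sep _; rewrite size_residues_II0.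
have -> : (size (residues (cmi_mems K')) <= 1)%N = (size (residues (cmi_mems K)) <= 1)%N.
  by rewrite [LHS]leqNgt [RHS]leqNgt size_res.
case: leqP => //= size_res2.
by split=> //; rewrite !perm_cons; apply: blocks_perm blocks blocks' same_sep size_res2.
Qed.

Lemma can_pur_eq_of_coin_valid K K' : (forall S, coin_valid S K = coin_valid S K') ->
  canform_eq (can (pur K)) (can (pur K')).
Proof.
move=> same; apply: can_eq_of_coin_valid_pure; rewrite ?pure_pur // => S.
by rewrite !coin_valid_pur.
Qed.

End CoinCriterion.

Section CoinGap.
Variables (R : realDomainType) (n : nat).
Local Open Scope ring_scope.

Lemma cmi_gap_meets (c : R) (S : {set 'I_n}) (K : cmi n) : c != 0 ->
  cmi_gap (fun A => (A :&: S != set0)%:R * c) K = 0 <-> coin_valid S K.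
Proof.
case: K => C L c0; rewrite /cmi_gap /cond /coin_valid /=.
case: (boolP (C :&: S != set0)) => /= CS.
  have meetsC X : (X :|: C) :&: S != set0.
    by apply: contraNneq CS; rewrite setIUl => /eqP; rewrite setU_eq0 => /andP[].
  by rewrite big1 ?meetsC ?subrr // => Q _; rewrite meetsC subrr.
have meetsC X : (X :|: C) :&: S = X :&: S by rewrite setIUl (eqP (negbNE CS)) setU0.
rewrite mul0r subr0 meetsC bigcup_meets.
under eq_bigr do rewrite subr0 meetsC.
have -> : \sum_(Q <- L) (Q :&: S != set0)%:R * c = (hits L S)%:R * c.
  rewrite -big_distrl /=; congr (_ * c); rewrite -natr_sum.
  congr _%:R; rewrite /hits -sum1_count [RHS]big_mkcond.
  by apply: eq_bigr => Q _; case: (_ != _).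
rewrite -mulrBl; split=> [/eqP|]; last first.
  by case: (hits L S) => [|[|k]] //= _; rewrite subrr mul0r.
rewrite mulf_eq0 (negbTE c0) orbF subr_eq0.
by case: (hits L S) => [|[|k]] //; rewrite eqr_nat.
Qed.

End CoinGap.

From mathcomp Require Import boolp classical_sets fsbigop reals ereal esum exp.
From mathcomp Require Import ring lra.

Local Open Scope classical_set_scope.
Local Open Scope ring_scope.

Section NonnegativeEsum.
Variable R : realType.
Local Open Scope ereal_scope.

Lemma ge0_esumZl (T : choiceType) (S : set T) (c : R) (a : T -> \bar R) :
  (0 <= c)%R -> (forall x, 0 <= a x) ->
  \esum_(i in S) (c%:E * a i) = c%:E * \esum_(i in S) a i.
Proof.
move=> c0 a0; rewrite /esum -ereal_supZl //; last first.
  by apply/set0P; exists 0; exists set0; [exact: fsets_set0|rewrite fsbig_set0].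
congr ereal_sup; apply/seteqP; split => [y [X [finX XS] <-]|y [z [X [finX XS] <-] <-]].
  exists (\sum_(i \in X) a i); first by exists X.
  by rewrite !fsbig_finite // ge0_sume_distrr.
by exists X => //; rewrite !fsbig_finite // ge0_sume_distrr.
Qed.

Lemma exchange_esum (T1 T2 : choiceType) (a : T1 -> T2 -> \bar R) :
  (forall i j, 0 <= a i j) ->
  \esum_(i in [set: T1]) \esum_(j in [set: T2]) a i j =
  \esum_(j in [set: T2]) \esum_(i in [set: T1]) a i j.
Proof.
move=> a0; rewrite !esum_esum //.
rewrite (reindex_esum ([set: T2] `*`` (fun=> [set: T1])) _ (fun x => (x.2, x.1))) //.
split=> [[x y] _ //|[x1 y1] [x2 y2] _ _ [-> ->] //|[x y] _].
by exists (y, x).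
Qed.

Lemma le_esum_subset (T : choiceType) (S1 S2 : set T) (a : T -> \bar R) :
  (forall t, 0 <= a t) -> S1 `<=` S2 -> \esum_(t in S1) a t <= \esum_(t in S2) a t.
Proof.
move=> a0 sS; rewrite esum_mkcond [leRHS]esum_mkcond; apply: le_esum => x _.
case: ifP => h1; case: ifP => h2 //.
by move: h1 h2; rewrite !inE => /sS h /negP; rewrite inE.
Qed.

Lemma esum_fibers (T U : choiceType) (p : T -> R) (f : T -> U) (g : U -> R) :
  (forall x, 0 <= p x)%R -> (forall u, 0 <= g u)%R ->
  (forall u, \esum_(x in [set x | f x = u]) (p x)%:E \is a fin_num) ->
  \esum_(x in [set: T]) (p x * g (f x))%:E =
  \esum_(u in [set: U]) (fine (\esum_(x in [set x | f x = u]) (p x)%:E) * g u)%:E.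
Proof.
move=> p0 g0 fin.
transitivity (\esum_(u in [set: U]) \esum_(x in [set x | f x = u]) (g u * p x)%:E); last first.
  by apply: eq_esum => u _; rewrite EFinM fineK // muleC -ge0_esumZl.
rewrite esum_esum; last by move=> u x _ _; rewrite lee_fin mulr_ge0.
rewrite (reindex_esum [set: T] _ (fun x => (f x, x))) /=.
  by apply: eq_esum => x _; rewrite mulrC.
split=> [x _ //|x y _ _ [] //|[u x] [_ /= <-]].
by exists x.
Qed.

Lemma esum_indicator1 (T : choiceType) (D : set T) (a : T) (g : T -> R) :
  (forall x, 0 <= g x)%R ->
  \esum_(x in D) ((x == a)%:R * g x)%:E = ((a \in D)%:R * g a)%:E.
Proof.
move=> g_ge0; rewrite (esumID [set a]); last first.
  by move=> x _; rewrite lee_fin mulr_ge0.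
rewrite [X in _ + X]esum1 ?adde0; last by move=> x [_ /eqP/negbTE ->]; rewrite mul0r.
case: (boolP (a \in D)) => [/set_mem aD|aD].
  rewrite setIidr; last by move=> _ ->.
  by rewrite esum_set1 eqxx ?mul1r // lee_fin.
rewrite esum1 ?mul0r // => x [Dx /= xa]; case/negP: aD; rewrite -xa; exact: mem_set.
Qed.

End NonnegativeEsum.

Section Restriction.
Variable n : nat.
Implicit Types (A B : {set 'I_n}) (x y : outcome n).

Lemma restr_eq_subset A B x y : A \subset B -> restr B x = restr B y -> restr A x = restr A y.
Proof.
move=> sAB /ffunP eqB; apply/ffunP => i; rewrite !ffunE.
by case: ifP => // iA; move: (eqB i); rewrite !ffunE (fintype.subsetP sAB _ iA).
Qed.

Lemma restr_setU_eq A B x y : restr (A :|: B) x = restr (A :|: B) y <->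
  restr A x = restr A y /\ restr B x = restr B y.
Proof.
split=> [eqU|[/ffunP eqA /ffunP eqB]].
  by split; apply: restr_eq_subset eqU; rewrite (finset.subsetUl, finset.subsetUr).
apply/ffunP => i; move: (eqA i) (eqB i); rewrite !ffunE finset.in_setU.
by case: (i \in A); case: (i \in B).
Qed.

End Restriction.

Section Entropy.
Variables (R : realType) (n : nat) (p : outcome n -> R).
Hypothesis p_ge0 : forall x, 0 <= p x.
Hypothesis p_sum1 : (\esum_(x in [set: outcome n]) (p x)%:E = 1)%E.
Implicit Types (A B C : {set 'I_n}) (x y : outcome n).

Let pE_ge0 x : (0 <= (p x)%:E)%E. Proof. by rewrite lee_fin. Qed.

Lemma marg_ge0 A y : (0 <= marg p A y)%E.
Proof. exact: esum_ge0. Qed.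

Lemma marg_le1 A y : (marg p A y <= 1)%E.
Proof. by rewrite -p_sum1; apply: le_esum_subset. Qed.

Lemma marg_fin_num A y : marg p A y \is a fin_num.
Proof. by rewrite ge0_fin_numE ?marg_ge0 // (le_lt_trans (marg_le1 A y)) ?ltry. Qed.

Definition mass A x := fine (marg p A (restr A x)).

Lemma massE A x : (mass A x)%:E = marg p A (restr A x).
Proof. by rewrite fineK // marg_fin_num. Qed.

Lemma mass_ge0 A x : 0 <= mass A x.
Proof. by rewrite -lee_fin massE marg_ge0. Qed.

Lemma mass_le1 A x : mass A x <= 1.
Proof. by rewrite -lee_fin massE marg_le1. Qed.

Lemma mass_ge_p A x : p x <= mass A x.
Proof.
rewrite -lee_fin massE -(@esum_set1 _ _ x (fun y => (p y)%:E)) //.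
by apply: le_esum_subset => // y ->.
Qed.

Lemma mass_le_subset A B x : A \subset B -> mass B x <= mass A x.
Proof.
move=> sAB; rewrite -lee_fin !massE.
by apply: le_esum_subset => // y /= /(restr_eq_subset sAB).
Qed.

Lemma mass_gt0 A x : 0 < p x -> 0 < mass A x.
Proof. by move=> px_gt0; apply: lt_le_trans (mass_ge_p A x). Qed.

Lemma mass_restr A x y : restr A x = restr A y -> mass A x = mass A y.
Proof. by rewrite /mass => ->. Qed.

Lemma entropyE A :
  entropy p A = (\esum_(x in [set: outcome n]) (p x * - ln (mass A x))%:E)%E.
Proof.
rewrite /entropy (esum_fibers (f := restr A) (g := fun y => - ln (fine (marg p A y)))) //.
- by apply: eq_esum => y _; rewrite /eta /marg mulrN.
- by move=> y; rewrite oppr_ge0 ln_le0 // -lee_fin fineK ?marg_fin_num ?marg_le1.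
- exact: marg_fin_num.
Qed.

Lemma entropy_term_ge0 A x : 0 <= p x * - ln (mass A x).
Proof. by rewrite mulr_ge0 // oppr_ge0 ln_le0 // mass_le1. Qed.

Lemma entropy_ge0 A : (0 <= entropy p A)%E.
Proof. by rewrite entropyE; apply: esum_ge0 => x _; rewrite lee_fin entropy_term_ge0. Qed.

Lemma entropy_set0 : entropy p finset.set0 = 0%E.
Proof.
rewrite entropyE esum1 // => x _.
suff -> : mass finset.set0 x = 1 by rewrite ln1 oppr0 mulr0.
apply/eqP; rewrite -(@eqe R) massE /marg -p_sum1; apply/eqP; congr esum.
by apply/seteqP; split => y // _; apply/ffunP => i; rewrite !ffunE finset.in_set0.
Qed.

Lemma le_entropy A B : A \subset B -> (entropy p A <= entropy p B)%E.
Proof.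
move=> sAB; rewrite !entropyE; apply: le_esum => x _; rewrite lee_fin.
have [->|px0] := eqVneq (p x) 0; first by rewrite !mul0r.
have px_gt0 : 0 < p x by rewrite lt0r px0 p_ge0.
by rewrite ler_pM2l // lerN2 ler_ln ?mass_le_subset // posrE mass_gt0.
Qed.

Definition fiber_weight A x y := if restr A y == restr A x then p y else 0.

Lemma fiber_weight_ge0 A x y : 0 <= fiber_weight A x y.
Proof. by rewrite /fiber_weight; case: ifP. Qed.

Lemma mass_esum A x :
  (mass A x)%:E = (\esum_(y in [set: outcome n]) (fiber_weight A x y)%:E)%E.
Proof.
rewrite massE /marg esum_mkcond; apply: eq_esum => y _.
rewrite /fiber_weight; case: ifPn => [/set_mem/= ->|/negP yA]; first by rewrite eqxx.
by case: eqP => // eqA; case: yA; exact: mem_set.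
Qed.

Section Submodular.
Variables A B : {set 'I_n}.
Let Z := A :&: B.
Let U := A :|: B.

(* Gibbs' inequality: [ln t <= t - 1] at [t := ratio x], and [\sum_x p x * ratio x <= 1]. *)
Definition scaled x := p x / (mass Z x * mass U x).

Definition ratio x := mass A x * mass B x / (mass Z x * mass U x).

Definition pair_weight y z :=
  if restr Z z == restr Z y then p y * p z / mass Z y else 0.

Lemma scaled_ge0 x : 0 <= scaled x.
Proof. by rewrite divr_ge0 ?mulr_ge0 ?mass_ge0. Qed.

Lemma ratio_ge0 x : 0 <= ratio x.
Proof. by rewrite divr_ge0 ?mulr_ge0 ?mass_ge0. Qed.

Lemma pair_weight_ge0 y z : 0 <= pair_weight y z.
Proof. by rewrite /pair_weight; case: ifP => // _; rewrite divr_ge0 ?mulr_ge0 ?mass_ge0. Qed.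

(* The [x] agreeing with [y] on [A] and with [z] on [B] form the [X_U]-fiber of [x0]. *)
Lemma fiber_weight_pair x0 y z x : restr A y = restr A x0 -> restr B z = restr B x0 ->
  scaled x * fiber_weight A x y * fiber_weight B x z
  = p y * p z / (mass Z y * mass U x0) * fiber_weight U x0 x.
Proof.
move=> eqA0 eqB0; rewrite /fiber_weight.
have [eqUx|neqUx] := eqVneq (restr U x) (restr U x0).
  have [eqAx eqBx] := (restr_setU_eq _ _ _ _).1 eqUx.
  have eqZ : mass Z x = mass Z y.
    exact/mass_restr/(restr_eq_subset (finset.subsetIl A B))/(etrans eqAx (esym eqA0)).
  rewrite eqA0 eqB0 -eqAx -eqBx !eqxx /scaled (mass_restr eqUx) eqZ.
  by ring.
rewrite mulr0; case: eqP => eqAx; last by rewrite mulr0 mul0r.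
case: eqP => eqBx; last by rewrite mulr0.
by case/eqP: neqUx; apply/restr_setU_eq; rewrite -eqA0 -eqB0 eqAx eqBx.
Qed.

Lemma esum_fiber_pair_le y z :
  (\esum_(x in [set: outcome n])
     (scaled x * fiber_weight A x y * fiber_weight B x z)%:E <= (pair_weight y z)%:E)%E.
Proof.
case: (pselect (exists x0, restr A y = restr A x0 /\ restr B z = restr B x0)); last first.
  move=> no_x0; rewrite esum1 ?lee_fin ?pair_weight_ge0 // => x _; rewrite /fiber_weight.
  case: eqP => [eqA|]; last by rewrite mulr0 mul0r.
  by case: eqP => [eqB|]; [case: no_x0; exists x|rewrite mulr0].
move=> [x0 [eqA0 eqB0]].
under eq_esum do rewrite (fiber_weight_pair _ eqA0 eqB0) EFinM.
rewrite ge0_esumZl ?divr_ge0 ?mulr_ge0 ?mass_ge0 //; last first.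
  by move=> x; rewrite lee_fin fiber_weight_ge0.
rewrite -mass_esum -EFinM lee_fin /pair_weight.
rewrite (restr_eq_subset (finset.subsetIr A B) eqB0).
rewrite -(restr_eq_subset (finset.subsetIl A B) eqA0) eqxx.
have [->|mU0] := eqVneq (mass U x0) 0; first by rewrite mulr0 divr_ge0 ?mulr_ge0 ?mass_ge0.
by rewrite invfM mulrA -(mulrA _ _ (mass U x0)) mulVf // mulr1.
Qed.

Lemma p_ratio_esum x : ((p x * ratio x)%:E =
  \esum_(y in [set: outcome n]) \esum_(z in [set: outcome n])
    (scaled x * fiber_weight A x y * fiber_weight B x z)%:E)%E.
Proof.
have inner y : (\esum_(z in [set: outcome n])
    (scaled x * fiber_weight A x y * fiber_weight B x z)%:E =
    (mass B x)%:E * (scaled x * fiber_weight A x y)%:E)%E.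
  rewrite mass_esum muleC -ge0_esumZl.
  - by apply: eq_esum => z _; rewrite -EFinM mulrC.
  - by rewrite mulr_ge0 ?scaled_ge0 ?fiber_weight_ge0.
  - by move=> z; rewrite lee_fin fiber_weight_ge0.
rewrite (eq_esum (fun y _ => inner y)) ge0_esumZl ?mass_ge0 //; last first.
  by move=> y; rewrite lee_fin mulr_ge0 ?scaled_ge0 ?fiber_weight_ge0.
under eq_esum do rewrite EFinM.
rewrite ge0_esumZl ?scaled_ge0 //; last by move=> y; rewrite lee_fin fiber_weight_ge0.
rewrite -(mass_esum A x) -!EFinM.
by congr (_%:E); rewrite /scaled /ratio; ring.
Qed.

Lemma esum_p_ratio_le1 : (\esum_(x in [set: outcome n]) (p x * ratio x)%:E <= 1)%E.
Proof.
have term_ge0 x y z :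
    (0 <= (scaled x * fiber_weight A x y * fiber_weight B x z)%:E)%E.
  by rewrite lee_fin mulr_ge0 ?fiber_weight_ge0 // mulr_ge0 ?scaled_ge0 ?fiber_weight_ge0.
under eq_esum do rewrite p_ratio_esum.
rewrite exchange_esum; last by move=> x y; apply: esum_ge0.
under eq_esum do rewrite exchange_esum //.
apply: (@le_trans _ _ (\esum_(y in [set: outcome n]) \esum_(z in [set: outcome n])
    (pair_weight y z)%:E)%E).
  by apply: le_esum => y _; apply: le_esum => z _; apply: esum_fiber_pair_le.
rewrite -p_sum1; apply: le_esum => y _.
have -> : (\esum_(z in [set: outcome n]) (pair_weight y z)%:E =
    (p y / mass Z y)%:E * \esum_(z in [set: outcome n]) (fiber_weight Z y z)%:E)%E.
  rewrite -ge0_esumZl ?divr_ge0 ?mass_ge0 //; last by move=> z; rewrite lee_fin fiber_weight_ge0.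
  apply: eq_esum => z _; rewrite /pair_weight /fiber_weight -EFinM.
  by case: eqP; rewrite ?mulr0 // mulrAC.
rewrite -mass_esum -EFinM lee_fin.
have [->|mZ0] := eqVneq (mass Z y) 0; first by rewrite mulr0.
by rewrite -mulrA mulVf // mulr1.
Qed.

Lemma gibbs_pointwise x :
  p x * - ln (mass U x) + p x * - ln (mass Z x) + p x <=
  p x * - ln (mass A x) + p x * - ln (mass B x) + p x * ratio x.
Proof.
have [->|px0] := eqVneq (p x) 0; first by rewrite !mul0r !addr0.
have px_gt0 : 0 < p x by rewrite lt0r px0 p_ge0.
have mass_pos C : mass C x \in Num.pos by rewrite posrE mass_gt0.
have ln_ratio : ln (ratio x) = ln (mass A x) + ln (mass B x) - (ln (mass Z x) + ln (mass U x)).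
  by rewrite /ratio ln_div ?posrE ?mulr_gt0 ?mass_gt0 // !lnM.
have ratio_gt0 : 0 < ratio x by rewrite /ratio divr_gt0 ?mulr_gt0 ?mass_gt0.
have : ln (ratio x) <= ratio x - 1.
  by have := @le_ln1Dx R (ratio x - 1); rewrite addrCA subrr addr0; apply; lra.
move/(ler_wpM2l (p_ge0 x)); rewrite ln_ratio.
move: (ln (mass A x)) (ln (mass B x)) (ln (mass Z x)) (ln (mass U x)) (ratio x) (p x).
move=> a b c d t q; nra.
Qed.

Lemma entropy_submod : (entropy p U + entropy p Z <= entropy p A + entropy p B)%E.
Proof.
have term_ge0 C x : (0 <= (p x * - ln (mass C x))%:E)%E.
  by rewrite lee_fin entropy_term_ge0.
have pr_ge0 x : (0 <= (p x * ratio x)%:E)%E by rewrite lee_fin mulr_ge0 ?ratio_ge0.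
have : (\esum_(x in [set: outcome n])
    ((p x * - ln (mass U x))%:E + (p x * - ln (mass Z x))%:E + (p x)%:E) <=
  \esum_(x in [set: outcome n])
    ((p x * - ln (mass A x))%:E + (p x * - ln (mass B x))%:E + (p x * ratio x)%:E))%E.
  by apply: le_esum => x _; rewrite -!EFinD lee_fin gibbs_pointwise.
rewrite !esumD; try by move=> x _; rewrite ?adde_ge0 ?term_ge0 ?pr_ge0 ?lee_fin.
rewrite -!entropyE p_sum1 => /le_trans le_gibbs.
by rewrite -(leeD2rE _ _ (fin_numE 1%E)) le_gibbs // leeD2l // esum_p_ratio_le1.
Qed.

End Submodular.

Lemma entropy_subadd A B : (entropy p (A :|: B) <= entropy p A + entropy p B)%E.
Proof.
apply: le_trans (entropy_submod A B).
by rewrite leeDl // entropy_ge0.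
Qed.

Section FiniteEntropy.
Hypothesis entropy1_lty : forall i, (entropy p [set i] < +oo)%E.

Lemma entropy_fin_num A : entropy p A \is a fin_num.
Proof.
rewrite -[A]bigcup_set1E -big_enum /=; elim: (enum A) => [|i s IH].
  by rewrite big_nil entropy_set0.
rewrite big_cons ge0_fin_numE ?entropy_ge0 //.
apply: le_lt_trans (entropy_subadd _ _) _.
by rewrite lte_add_pinfty // -ge0_fin_numE ?entropy_ge0.
Qed.

Lemma fine_entropy_mono A B : A \subset B -> fine (entropy p A) <= fine (entropy p B).
Proof. by move=> sAB; rewrite fine_le ?entropy_fin_num ?le_entropy. Qed.

Lemma fine_entropy_submod A B : fine (entropy p (A :|: B)) + fine (entropy p (A :&: B)) <=
  fine (entropy p A) + fine (entropy p B).
Proof.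
rewrite -!fineD ?entropy_fin_num // fine_le ?fin_numD ?entropy_fin_num //.
exact: entropy_submod.
Qed.

End FiniteEntropy.

End Entropy.

Section CoinDistribution.
Variables (R : realType) (n : nat) (S : {set 'I_n}).
Implicit Types (A : {set 'I_n}) (x : outcome n).

Definition coin0 : outcome n := [ffun => 0%N].
Definition coin1 : outcome n := [ffun i => nat_of_bool (i \in S)].

(* For [S = set0] the two outcomes coincide and [coin] is a point mass. *)
Definition coin x : R := ((x == coin0)%:R + (x == coin1)%:R) / 2.

Lemma coin_ge0 x : 0 <= coin x.
Proof. by rewrite divr_ge0 ?addr_ge0 ?ler0n. Qed.

Lemma esum_coin (D : set (outcome n)) (g : outcome n -> R) : (forall x, 0 <= g x) ->
  (\esum_(x in D) (coin x * g x)%:E =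
   (((coin0 \in D)%:R * g coin0 + (coin1 \in D)%:R * g coin1) / 2)%:E)%E.
Proof.
move=> g_ge0; have g2_ge0 x : 0 <= g x / 2 by rewrite divr_ge0.
under eq_esum do rewrite mulrAC mulrDl mulrDl -!mulrA EFinD.
rewrite esumD ?esum_indicator1 // => [|x _|x _]; last 2 first.
- by rewrite lee_fin mulr_ge0.
- by rewrite lee_fin mulr_ge0.
by rewrite -EFinD !mulrA -mulrDl.
Qed.

Lemma coin_sum1 : (\esum_(x in [set: outcome n]) (coin x)%:E = 1)%E.
Proof.
under eq_esum do rewrite -[coin _]mulr1.
by rewrite esum_coin // !in_setT /= !mulr1; congr (_%:E); lra.
Qed.

Lemma restr_coin1 A : (restr A coin1 == restr A coin0) = (A :&: S == finset.set0).
Proof.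
apply/eqP/eqP => [/ffunP eq10|AS0].
  apply/setP => i; move: (eq10 i); rewrite !ffunE finset.in_setI finset.in_set0.
  by case: (i \in A); case: (i \in S).
apply/ffunP => i; move/setP: AS0 => /(_ i); rewrite !ffunE finset.in_setI finset.in_set0.
by case: (i \in A); case: (i \in S).
Qed.

Lemma marg_coin A y :
  marg coin A y = (((restr A coin0 == y)%:R + (restr A coin1 == y)%:R) / 2)%:E.
Proof.
have fiber_mem z : (z \in [set x | restr A x = y]) = (restr A z == y).
  by apply/idP/eqP => [/set_mem //|eqz]; apply: mem_set.
rewrite /marg; under eq_esum do rewrite -[coin _]mulr1.
by rewrite esum_coin // !mulr1 !fiber_mem.
Qed.

Lemma mass_coin A x : x \in [:: coin0; coin1] ->
  mass coin A x = (1 + (A :&: S == finset.set0)%:R) / 2.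
Proof.
rewrite /mass marg_coin /= !inE => /orP[]/eqP->; rewrite eqxx ?restr_coin1 //.
by rewrite eq_sym restr_coin1 addrC.
Qed.

Lemma entropy_coin A : entropy coin A = ((A :&: S != finset.set0)%:R * ln 2)%:E.
Proof.
rewrite (entropyE coin_ge0 coin_sum1) esum_coin; last first.
  by move=> x; rewrite oppr_ge0 ln_le0 // (mass_le1 coin_ge0 coin_sum1).
rewrite !in_setT !mul1r !mass_coin ?inE ?eqxx ?orbT //; congr (_%:E).
case: eqP => _ /=; first by rewrite mul0r -[1 + 1]/(2%:R) divff // ln1 oppr0 addr0 mul0r.
by rewrite addr0 !mul1r lnV ?posrE // opprK; lra.
Qed.

Lemma coin_joint : is_joint_dist coin.
Proof.
split; [exact: coin_ge0|split; first exact: coin_sum1].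
by move=> i; rewrite entropy_coin ltry.
Qed.

Lemma cmi_valid_coin K : cmi_valid coin K <-> coin_valid S K.
Proof.
have ln2_neq0 : ln 2 != 0 :> R by rewrite gt_eqF // ln_gt0 // ltr1n.
have fine_entropy : (fun A => fine (entropy coin A)) = fun A => (A :&: S != finset.set0)%:R * ln 2.
  by apply: funext => A; rewrite entropy_coin.
by rewrite -(cmi_gap_meets _ _ ln2_neq0) -fine_entropy.
Qed.

End CoinDistribution.

Theorem mainTheorem2 (n : nat) (K K' : cmi n) :
  cmi_equiv K K' <-> canform_eq (can (pur K)) (can (pur K')).
Proof.
split=> [equiv | eq_can].
- apply: can_pur_eq_of_coin_valid => S.
  by apply/idP/idP => /cmi_valid_coin/(equiv _ (coin_joint _ _))/cmi_valid_coin.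
- move=> p [p_ge0 [p_sum1 entropy1_lty]].
  have h_mono := fine_entropy_mono p_ge0 p_sum1 entropy1_lty.
  have h_submod := fine_entropy_submod p_ge0 p_sum1 entropy1_lty.
  rewrite /cmi_valid /centropy.
  by rewrite !(cmi_gap_eq0 h_mono h_submod); apply: can_valid_eq.
Qed.
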